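(* Let $q$ be a prime power and $1\le s<t$ integers. If there exists a linear OA$(s,t,q)$, then there exist a linear AOA$(s,t,t,q)$ and a linear AOA$(t-s,t,t,q)$.
   Context: An orthogonal array OA$(t,k,v)$ (with $1\le t\le k$) is a $v^t\times k$ array with entries from a set $X$ of size $v$ such that, for every choice of $t$ of its columns, each $t$-tuple in $X^t$ appears exactly once as a row of the corresponding $v^t\times t$ subarray. For integers $1\le s\le t\le k$, an augmented orthogonal array AOA$(s,t,k,v)$ is a $v^t\times(k+1)$ array $A$ such that: (1) the first $k$ columns of $A$ form an OA$(t,k,v)$ on a symbol set $X$ of size $v$; (2) the last column of $A$ has entries from a set $Y$ of size $v^{t-s}$; (3) for any choice of $s$ of the first $k$ columns, these $s$ columns together with the last column contain every $(s+1)$-tuple of $X^s\times Y$ exactly once as a row. For a prime power $q$, an OA$(t,k,q)$ over $\mathbb{F}_q$ is linear if its set of rows is a $t$-dimensional $\mathbb{F}_q$-subspace of $\mathbb{F}_q^k$; an AOA$(s,t,k,q)$ is linear if $X=\mathbb{F}_q$, $Y=\mathbb{F}_q^{t-s}$, and its set of rows, regarded as vectors in $\mathbb{F}_q^{k}\times\mathbb{F}_q^{t-s}=\mathbb{F}_q^{k+t-s}$, is an $\mathbb{F}_q$-linear subspace. *)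

From HB Require Import structures.
From mathcomp Require Import all_boot all_order all_algebra.
Unset Implicit Arguments. Unset Strict Implicit. Unset Printing Implicit Defensive.
Import GRing.Theory.

(* An OA(t,k,v) on the symbol set X (v = #|X|): a v^t x k array A
   (rows indexed by 'I_(#|X|^t)) such that for every choice of t columns
   (an injective c : 'I_t -> 'I_k) every t-tuple x appears exactly once. *)
Definition is_OA (X : finType) (t k : nat) (A : 'M[X]_(#|X| ^ t, k)) : Prop :=
  (0 < t <= k)%N /\
  forall c : 'I_t -> 'I_k, injective c ->
  forall x : {ffun 'I_t -> X},
    #|[set i : 'I_(#|X| ^ t) | [forall j, A i (c j) == x j]]| = 1%N.

(* AOA(s,t,k,v): first k columns A (over X), last column B (over Y). *)
Definition is_AOA (X Y : finType) (s t k : nat)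
    (A : 'M[X]_(#|X| ^ t, k)) (B : 'I_(#|X| ^ t) -> Y) : Prop :=
  (0 < s <= t)%N /\
  is_OA X t k A /\
  #|Y| = (#|X| ^ (t - s))%N /\
  forall c : 'I_s -> 'I_k, injective c ->
  forall (x : {ffun 'I_s -> X}) (y : Y),
    #|[set i : 'I_(#|X| ^ t) | [forall j, A i (c j) == x j] && (B i == y)]| = 1%N.

(* Linear OA(t,k,q) over F = F_q: its set of rows is a t-dimensional
   subspace of F^k (subspaces represented as row spaces of matrices). *)
Definition is_linear_OA (F : finFieldType) (t k : nat)
    (A : 'M[F]_(#|F| ^ t, k)) : Prop :=
  is_OA F t k A /\
  exists U : 'M[F]_k, \rank U = t /\
    forall v : 'rV[F]_k, (exists i, v = row i A) <-> (v <= U)%MS.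

(* Linear AOA(s,t,k,q): X = F, Y = F^(t-s), and the set of rows, viewed in
   F^k x F^(t-s) = F^(k+t-s), is an F-linear subspace. *)
Definition is_linear_AOA (F : finFieldType) (s t k : nat)
    (A : 'M[F]_(#|F| ^ t, k)) (B : 'I_(#|F| ^ t) -> 'rV[F]_(t - s)) : Prop :=
  is_AOA F _ s t k A B /\
  exists U : 'M[F]_(k + (t - s)),
    forall v : 'rV[F]_(k + (t - s)),
      (exists i, v = row_mx (row i A) (B i)) <-> (v <= U)%MS.

From HB Require Import structures.
From mathcomp Require Import all_boot all_order all_algebra.
Import GRing.Theory.
Set Implicit Arguments.
Unset Strict Implicit.
Local Open Scope ring_scope.

(* Both arrays consist of all of F^t, with last column v |-> v *m M for a
   t x (t - s') matrix M.  Counting (q^s' * q^(t-s') = q^t) reduces the AOA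
   property on columns c to: no nonzero v vanishes on c with v *m M = 0.
   For the AOA(s,t,t,q) take the left kernel of M to be the row space U of the
   linear OA(s,t,q): a vector of U vanishing on s columns is 0.  For the
   AOA(t-s,t,t,q) take the left kernel of M to be the orthogonal of U: a
   vector orthogonal to U and vanishing on t-s columns is 0, because the OA
   has rows taking any prescribed values on the s remaining columns. *)

Section OrthogonalArray.
Variables (X : finType) (t k : nat) (A : 'M[X]_(#|X| ^ t, k)).
Hypothesis OA_A : is_OA X t k A.

Lemma OA_row_exists (c : 'I_t -> 'I_k) (x : {ffun 'I_t -> X}) :
  injective c -> exists i, forall j, A i (c j) = x j.
Proof.
move=> injc; have /eqP/cards1P[i0 Ei0] := OA_A.2 c injc x.
have : i0 \in [set i0] by rewrite inE.
by rewrite -Ei0 inE => /forallP Ai0; exists i0 => j; apply/eqP.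
Qed.

Lemma OA_row_inj (c : 'I_t -> 'I_k) i i' :
  injective c -> (forall j, A i (c j) = A i' (c j)) -> i = i'.
Proof.
move=> injc Aii'.
have /eqP/cards1P[i0 Ei0] := OA_A.2 c injc [ffun j => A i (c j)].
have in_set l : (forall j, A l (c j) = A i (c j)) -> l = i0.
  move=> Al; apply/set1P; rewrite -Ei0 inE.
  by apply/forallP => j; rewrite ffunE Al.
by rewrite (in_set i) // (in_set i') // => j; rewrite Aii'.
Qed.

End OrthogonalArray.

Lemma ord_complement_enum n m r (c : 'I_m -> 'I_n) :
  injective c -> (r + m = n)%N ->
  exists d : 'I_r -> 'I_n,
    injective d /\ forall l, l \notin codom c -> exists j, l = d j.
Proof.
move=> injc rmn; set Im := [set c j | j in 'I_m].
have card_compl : r = #|~: Im|.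
  apply/eqP; rewrite -(eqn_add2r m) rmn; apply/eqP.
  by have := cardsC Im; rewrite card_imset // !card_ord addnC.
exists (fun j => enum_val (cast_ord card_compl j)); split.
  by move=> j j' /enum_val_inj /cast_ord_inj.
move=> l /codomP l_notin_c.
have l_compl : l \in ~: Im.
  by rewrite inE; apply/imsetP => -[j _ lj]; apply: l_notin_c; exists j.
exists (cast_ord (esym card_compl) (enum_rank_in l_compl l)).
by rewrite cast_ordKV enum_rankK_in.
Qed.

Section LinearOrthogonalArray.
Variables (F : finFieldType) (s k : nat) (A : 'M[F]_(#|F| ^ s, k)).
Variable U : 'M[F]_k.
Hypothesis OA_A : is_OA F s k A.
Hypothesis rowsA : forall i, (row i A <= U)%MS.
Hypothesis U_rows : forall v : 'rV[F]_k, (v <= U)%MS -> exists i, v = row i A.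

Lemma linear_OA_vanishing (c : 'I_s -> 'I_k) (v : 'rV[F]_k) :
  injective c -> (v <= U)%MS -> (forall j, v 0 (c j) = 0) -> v = 0.
Proof.
move=> injc vU vc.
have [i vi] := U_rows vU; have [i0 zero_i0] := U_rows (sub0mx 1 U).
suff ii0 : i = i0 by rewrite vi ii0 -zero_i0.
apply: (OA_row_inj OA_A injc) => j.
have := congr1 (fun w : 'rV_k => w 0 (c j)) zero_i0.
by rewrite !mxE => <-; rewrite -(vc j) vi mxE.
Qed.

Lemma linear_OA_orthogonal_vanishing m (c : 'I_m -> 'I_k) (v : 'rV[F]_k) :
  injective c -> (s + m = k)%N ->
  (forall w : 'rV[F]_k, (w <= U)%MS -> v *m w^T = 0) ->
  (forall j, v 0 (c j) = 0) -> v = 0.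
Proof.
move=> injc smk v_perp vc; apply/rowP => l; rewrite mxE.
have [/codomP[j ->] | l_notin_c] := boolP (l \in codom c); first exact: vc.
have [d [injd d_onto]] := ord_complement_enum injc smk.
have [i Ai] := OA_row_exists OA_A [ffun j => (d j == l)%:R] injd.
have /matrixP/(_ 0 0) := v_perp _ (rowsA i).
rewrite !mxE (bigD1 l) //= big1 ?addr0 => [|l' l'l].
  have [j lj] := d_onto l l_notin_c.
  by rewrite !mxE lj Ai ffunE -lj eqxx mulr1.
rewrite !mxE; have [/codomP[j ->] | l'_notin_c] := boolP (l' \in codom c).
  by rewrite vc mul0r.
have [j l'j] := d_onto l' l'_notin_c.
by rewrite l'j Ai ffunE -l'j (negbTE l'l) mulr0.
Qed.

End LinearOrthogonalArray.

Section FullSpaceArray.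
Variables (F : finFieldType) (t : nat).

Lemma card_rV_exp : (#|F| ^ t)%N = #|{: 'rV[F]_t}|.
Proof. by rewrite card_mx mul1n. Qed.

Definition rV_of_index (i : 'I_(#|F| ^ t)) : 'rV[F]_t :=
  enum_val (cast_ord card_rV_exp i).

Lemma rV_of_index_inj : injective rV_of_index.
Proof. by move=> i j /enum_val_inj /cast_ord_inj. Qed.

Lemma rV_of_index_surj (v : 'rV[F]_t) : exists i, v = rV_of_index i.
Proof.
exists (cast_ord (esym card_rV_exp) (enum_rank v)).
by rewrite /rV_of_index cast_ordKV enum_rankK.
Qed.

Definition full_space_array : 'M[F]_(#|F| ^ t, t) := \matrix_i rV_of_index i.

Lemma row_full_space_array i : row i full_space_array = rV_of_index i.
Proof. by rewrite rowK. Qed.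

Lemma full_space_arrayE i j : full_space_array i j = rV_of_index i 0 j.
Proof. by rewrite !mxE. Qed.

Lemma card_full_space_fibre s m (M : 'M[F]_(t, m)) (c : 'I_s -> 'I_t)
    (x : {ffun 'I_s -> F}) (y : 'rV[F]_m) :
  (s + m = t)%N ->
  (forall v : 'rV[F]_t, (forall j, v 0 (c j) = 0) -> v *m M = 0 -> v = 0) ->
  #|[set i | [forall j, full_space_array i (c j) == x j]
             && (row i full_space_array *m M == y)]| = 1%N.
Proof.
move=> smt kerM.
pose proj i := ([ffun j => rV_of_index i 0 (c j)], rV_of_index i *m M).
have inj_proj : injective proj.
  move=> i i' [/ffunP eq_c eq_M]; apply: rV_of_index_inj; apply/subr0_eq.
  apply: kerM; last by rewrite mulmxBl eq_M subrr.
  by move=> j; rewrite !mxE; have := eq_c j; rewrite !ffunE => ->; rewrite subrr.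
have /codomP[i0 i0xy] : (x, y) \in codom proj.
  apply: inj_card_onto => //.
  by rewrite card_prod card_ffun !card_ord card_mx mul1n -expnD smt.
apply/eqP/cards1P; exists i0; apply/setP => i; rewrite !inE row_full_space_array.
apply/andP/eqP => [[/forallP xc /eqP yM] | ->].
  apply: inj_proj; rewrite -i0xy /proj -yM; congr pair.
  by apply/ffunP => j; rewrite ffunE -full_space_arrayE; apply/eqP.
case: i0xy => -> ->; split=> //.
by apply/forallP => j; rewrite full_space_arrayE ffunE.
Qed.

Lemma full_space_array_OA : (0 < t)%N -> is_OA F t t full_space_array.
Proof.
move=> t_gt0; split; first by rewrite t_gt0 leqnn.
move=> c injc x; rewrite -(card_full_space_fibre (c := c) (M := 0 : 'M_(t, 0)) x 0).
- by apply: eq_card => i; rewrite !inE mulmx0 eqxx andbT.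
- exact: addn0.
move=> v vc _; apply/rowP => l; rewrite mxE.
have /codomP[j ->] : l \in codom c by apply: (inj_card_onto injc).
exact: vc.
Qed.

Lemma linear_AOA_full_space s (M : 'M[F]_(t, t - s)) :
  (0 < s <= t)%N ->
  (forall c : 'I_s -> 'I_t, injective c ->
   forall v : 'rV[F]_t, (forall j, v 0 (c j) = 0) -> v *m M = 0 -> v = 0) ->
  exists (A : 'M[F]_(#|F| ^ t, t)) (B : 'I_(#|F| ^ t) -> 'rV[F]_(t - s)),
    is_linear_AOA F s t t A B.
Proof.
move=> /andP[s_gt0 le_st] kerM.
exists full_space_array, (fun i => row i full_space_array *m M); split.
  split; first by rewrite s_gt0.
  split; first exact/full_space_array_OA/(leq_trans s_gt0).
  split; first by rewrite card_mx mul1n.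
  move=> c injc x y; apply: card_full_space_fibre; first exact: subnKC.
  exact: kerM.
exists <<row_mx 1%:M M>>%MS => v; rewrite genmxE; split.
  move=> [i ->]; rewrite -[X in row_mx X _]mulmx1 -mul_mx_row.
  exact: submxMl.
move=> /submxP[w ->]; have [i ->] := rV_of_index_surj w.
by exists i; rewrite mul_mx_row mulmx1 row_full_space_array.
Qed.

End FullSpaceArray.

Lemma exists_mx_lker_sub (F : fieldType) n m (U : 'M[F]_n) :
  (\rank U + m = n)%N ->
  exists M : 'M[F]_(n, m), forall v : 'rV[F]_n, v *m M = 0 -> (v <= U)%MS.
Proof.
move=> rkU; have rk_coker : m = \rank (cokermx U).
  by rewrite mxrank_coker -[X in (X - _)%N]rkU addKn.
subst m; exists (col_base (cokermx U)) => v vM.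
by rewrite submxE -(mulmx_base (cokermx U)) mulmxA vM mul0mx.
Qed.

Lemma exists_mx_lker_orthogonal (F : fieldType) (n r : nat) (U : 'M[F]_n) :
  \rank U = r :> nat ->
  exists M : 'M[F]_(n, r), forall v : 'rV[F]_n, v *m M = 0 ->
    forall w : 'rV[F]_n, (w <= U)%MS -> v *m w^T = 0.
Proof.
move=> <-; exists (row_base U)^T => v vM w.
rewrite -(eq_row_base U) => /submxP[D ->].
by rewrite trmx_mul mulmxA vM mul0mx.
Qed.

Theorem theorem3p4 (F : finFieldType) (s t : nat) :
  (1 <= s)%N -> (s < t)%N ->
  (exists A : 'M[F]_(#|F| ^ s, t), is_linear_OA F s t A) ->
  (exists (A : 'M[F]_(#|F| ^ t, t)) (B : 'I_(#|F| ^ t) -> 'rV[F]_(t - s)),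
      is_linear_AOA F s t t A B) /\
  (exists (A : 'M[F]_(#|F| ^ t, t)) (B : 'I_(#|F| ^ t) -> 'rV[F]_(t - (t - s))),
      is_linear_AOA F (t - s) t t A B).
Proof.
move=> s_gt0 lt_st [A [OA_A [U [rkU rowsU]]]].
have U_rows v : (v <= U)%MS -> exists i, v = row i A by move/rowsU.
have rowsA i : (row i A <= U)%MS by apply/rowsU; exists i.
have le_st : (s <= t)%N := ltnW lt_st.
split.
  have rk_compl : (\rank U + (t - s) = t)%N by rewrite rkU subnKC.
  have [M kerM] := exists_mx_lker_sub rk_compl.
  apply: (linear_AOA_full_space (M := M)); first by rewrite s_gt0.
  move=> c injc v vc /kerM vU.
  exact: (linear_OA_vanishing OA_A U_rows injc vU vc).
have rk_dual : \rank U = (t - (t - s))%N by rewrite subKn.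
have [M kerM] := exists_mx_lker_orthogonal rk_dual.
apply: (linear_AOA_full_space (M := M)); first by rewrite subn_gt0 lt_st leq_subr.
move=> c injc v vc /kerM v_perp.
exact: (linear_OA_orthogonal_vanishing OA_A rowsA injc (subnKC le_st) v_perp vc).
Qed.
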